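(* Let $X\subset\mathbb{R}^n$, let $F(\cdot,\xi)$ be a real-valued random function with $f(x)=\mathbb{E}[F(x,\xi)]$ finite, and let $c\in(0,1]$. For $x\in X$, $y\in\mathbb{R}$, $z>0$ define \[ \phi(x,y,z)=\frac cz\mathbb{E}[(F(x,\xi)-y)_+^2]+y+\frac c4z,\qquad \Phi(x,y)=y+c\,\mathbb{E}^{1/2}[(F(x,\xi)-y)_+^2], \] and $h(x)=f(x)+c\,\mathbb{E}^{1/2}[(F(x,\xi)-f(x))_+^2]$. Then for any $x\in X$ and $y\in\mathbb{R}$, $\inf_{z>0}\phi(x,y,z)=\Phi(x,y)$ is attained at $z=2\mathbb{E}^{1/2}[(F(x,\xi)-y)_+^2]$. Moreover, for any $x\in X$, \[ \inf_{y\ge f(x),z>0}\phi(x,y,z)=\inf_{y\ge f(x)}\Phi(x,y)=h(x), \] attained at $y=f(x)$ and $z=2\mathbb{E}^{1/2}[(F(x,\xi)-f(x))_+^2]$.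
   Context: $(a)_+=\max\{a,0\}$; $F(x,\xi)$ is assumed to have finite second moment for each $x$. *)

From HB Require Import structures.
From mathcomp Require Import all_boot all_order all_algebra.
From mathcomp Require Import all_classical all_reals all_analysis.
Set Implicit Arguments. Unset Strict Implicit. Unset Printing Implicit Defensive.
Import Order.TTheory GRing.Theory Num.Theory.
Local Open Scope classical_set_scope.
Local Open Scope ring_scope.

Section defs.
Context {d : measure_display} {T : measurableType d} {R : realType}.
Variable (P : probability T R).

Definition ppart (a : R) : R := Num.max a 0.

Definition fmean {n : nat} (F : 'rV[R]_n -> T -> R) (x : 'rV[R]_n) : R :=
  fine ('E_P[F x])%E.

Definition sqpart {n : nat} (F : 'rV[R]_n -> T -> R) (x : 'rV[R]_n) (y : R) : R :=
  fine ('E_P[fun w => (ppart (F x w - y) ^+ 2)%R])%E.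

Definition phi (c : R) {n : nat} (F : 'rV[R]_n -> T -> R) (x : 'rV[R]_n) (y z : R) : R :=
  c / z * sqpart F x y + y + c / 4 * z.

Definition Phi (c : R) {n : nat} (F : 'rV[R]_n -> T -> R) (x : 'rV[R]_n) (y : R) : R :=
  y + c * Num.sqrt (sqpart F x y).

Definition hfun (c : R) {n : nat} (F : 'rV[R]_n -> T -> R) (x : 'rV[R]_n) : R :=
  fmean F x + c * Num.sqrt (sqpart F x (fmean F x)).
End defs.

From HB Require Import structures.
From mathcomp Require Import all_boot all_order all_algebra.
From mathcomp Require Import all_classical all_reals all_analysis.
From mathcomp Require Import measurable_realfun ring lra.
Import Order.TTheory GRing.Theory Num.Theory.
Local Open Scope classical_set_scope.
Local Open Scope ring_scope.

(* By AM-GM, c S / z + c z / 4 >= c sqrt S for z > 0, with equality at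
   z = 2 sqrt S; this gives the infimum over z.  For the infimum over y, the
   map y |-> Phi(x, y) is nondecreasing when c <= 1: pointwise
   (a - y1)_+ <= (a - y2)_+ + (y2 - y1) for y1 <= y2, so by Minkowski
   sqrt E[(F - y)_+^2] is 1-Lipschitz in y.  Minkowski follows by
   integrating the Peter-Paul bound (u + v)^2 <= (1 + t) u^2 + (1 + 1/t) v^2
   and optimizing in t. *)

Section real_inequalities.
Context {R : realType}.
Implicit Types (A : set R) (a b c d e m S t y z : R).

Lemma inf_eq_lb_approx A m : lbound A m ->
  (forall e, 0 < e -> exists2 a, A a & a <= m + e) -> inf A = m.
Proof.
move=> mA approx; have [a Aa _] := approx 1 ltr01.
apply/eqP; rewrite eq_le lb_le_inf //; last by exists a.
rewrite andbT; apply/ler_addgt0Pr => e e0; have [b Ab be] := approx e e0.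
by apply: le_trans be; apply: ge_inf => //; exists m.
Qed.

Lemma sqrt_le_amgm c S y z : 0 < c -> 0 <= S -> 0 < z ->
  y + c * Num.sqrt S <= c / z * S + y + c / 4 * z.
Proof.
move=> c0 S0 z0; set s := Num.sqrt S.
have -> : S = s ^+ 2 by rewrite sqr_sqrtr.
have -> : c / z * s ^+ 2 + y + c / 4 * z
          = y + c * s + c / (4 * z) * (2 * s - z) ^+ 2.
  by field; rewrite gt_eqF.
by rewrite lerDl mulr_ge0 ?sqr_ge0 // divr_ge0 ?ltW // mulr_gt0.
Qed.

Lemma sqrt_eq_amgm c S y : 0 < S ->
  c / (2 * Num.sqrt S) * S + y + c / 4 * (2 * Num.sqrt S) = y + c * Num.sqrt S.
Proof.
move=> S0; have s0 : 0 < Num.sqrt S by rewrite sqrtr_gt0.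
by rewrite -{2}(sqr_sqrtr (ltW S0)); field; rewrite gt_eqF.
Qed.

Lemma sqrt_approx_amgm c S y e : 0 < c -> 0 <= S -> 0 < e ->
  exists2 z, 0 < z & c / z * S + y + c / 4 * z <= y + c * Num.sqrt S + e.
Proof.
move=> c0; rewrite le_eqVlt => /predU1P[<- e0|S0 e0].
  exists (4 * e / c); first by rewrite divr_gt0 // mulr_gt0.
  have -> : c / 4 * (4 * e / c) = e by field; rewrite gt_eqF.
  by rewrite sqrtr0 !mulr0 add0r addr0.
exists (2 * Num.sqrt S); first by rewrite mulr_gt0 // sqrtr_gt0.
by rewrite sqrt_eq_amgm // lerDl ltW.
Qed.

Lemma inf_amgm_sqrt c S y : 0 < c -> 0 <= S ->
  inf [set c / z * S + y + c / 4 * z | z in `]0, +oo[%classic] = y + c * Num.sqrt S.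
Proof.
move=> c0 S0; apply: inf_eq_lb_approx => [_ [z + <-]|e e0].
  by rewrite /= in_itv /= andbT; exact: sqrt_le_amgm.
have [z z0 le_z] := sqrt_approx_amgm c S y e c0 S0 e0.
by exists (c / z * S + y + c / 4 * z) => //; exists z; rewrite //= in_itv /= z0.
Qed.

Lemma sqrD_le_peter_paul a b t : 0 < t ->
  (a + b) ^+ 2 <= (1 + t) * a ^+ 2 + (1 + t^-1) * b ^+ 2.
Proof.
move=> t0; have -> : (1 + t) * a ^+ 2 + (1 + t^-1) * b ^+ 2
                     = (a + b) ^+ 2 + t^-1 * (t * a - b) ^+ 2.
  by field; rewrite gt_eqF.
by rewrite lerDl mulr_ge0 ?sqr_ge0 // invr_ge0 ltW.
Qed.

Lemma sqrt_le_add_of_peter_paul S1 S2 d : 0 <= S2 -> 0 < d ->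
  (forall t, 0 < t -> S1 <= (1 + t) * S2 + (1 + t^-1) * d ^+ 2) ->
  Num.sqrt S1 <= Num.sqrt S2 + d.
Proof.
move=> S20 d0 pp; set s := Num.sqrt S2.
suff : S1 <= (s + d) ^+ 2.
  by move=> /ler_wsqrtr; rewrite sqrtr_sqr ger0_norm // addr_ge0 ?sqrtr_ge0 ?ltW.
have d2 : 0 < d ^+ 2 by rewrite exprn_gt0.
move: S20; rewrite le_eqVlt => /predU1P[S2E|S2p].
  rewrite /s -S2E sqrtr0 add0r; apply/ler_addgt0Pr => e e0.
  have := pp (d ^+ 2 / e) (divr_gt0 d2 e0); rewrite -S2E mulr0 add0r.
  suff -> : (1 + (d ^+ 2 / e)^-1) * d ^+ 2 = d ^+ 2 + e by [].
  by field; rewrite !gt_eqF.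
have s0 : 0 < s by rewrite sqrtr_gt0.
have := pp (d / s) (divr_gt0 d0 s0).
rewrite -[in X in _ <= X -> _](sqr_sqrtr (ltW S2p)) -/s.
suff -> : (1 + d / s) * s ^+ 2 + (1 + (d / s)^-1) * d ^+ 2 = (s + d) ^+ 2 by [].
by field; rewrite !gt_eqF.
Qed.

Lemma ppart_ge0 a : 0 <= ppart a.
Proof. by rewrite /ppart le_max lexx orbT. Qed.

Lemma ppartB_le a y1 y2 : y1 <= y2 -> ppart (a - y1) <= ppart (a - y2) + (y2 - y1).
Proof.
move=> y12; rewrite /ppart ge_max; apply/andP; split.
  by rewrite -lerBlDr opprB addrA subrK le_max lexx.
by rewrite addr_ge0 ?subr_ge0 // le_max lexx orbT.
Qed.

End real_inequalities.

Lemma sqpart_ge0 d (T : measurableType d) (R : realType) (P : probability T R)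
    n (F : 'rV[R]_n -> T -> R) x y :
  0 <= sqpart P F x y.
Proof. by apply/fine_ge0/expectation_ge0 => w; exact: sqr_ge0. Qed.

Section excess_moment.
Context {d : measure_display} {T : measurableType d} {R : realType}.
Context (P : probability T R) {n : nat} {F : 'rV[R]_n -> T -> R} {x : 'rV[R]_n}.
Hypothesis mFx : measurable_fun setT (F x).
Hypothesis iFx : P.-integrable setT (fun w => (F x w ^+ 2)%:E).

Let excess (y : R) (w : T) : R := ppart (F x w - y) ^+ 2.

Let measurable_excess y : measurable_fun setT (excess y).
Proof.
apply: measurable_funX; apply: (measurable_maxr (f := fun w => F x w - y)).
  exact: measurable_funB.
exact: measurable_cst.
Qed.

Let integrable_excess y : P.-integrable setT (EFin \o excess y).
Proof.
have i2 : P.-integrable setT (fun w => (2 * F x w ^+ 2)%:E + (2 * y ^+ 2)%:E).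
  apply: integrableD => //; last exact: finite_measure_integrable_cst.
  under eq_fun do rewrite EFinM.
  exact: integrableZl.
apply: le_integrable i2 => //; first exact/measurable_EFinP.
move=> w _ /=; rewrite lee_fin !ger0_norm ?sqr_ge0 //; last first.
  by rewrite addr_ge0 // mulr_ge0 // sqr_ge0.
rewrite /excess /ppart; have := sqr_ge0 (F x w + y).
case: (leP (F x w - y) 0) => [_ _|_]; last by nra.
by rewrite expr0n /= addr_ge0 // mulr_ge0 // sqr_ge0.
Qed.

Let excess_Lfun1 y : excess y \in Lfun P 1.
Proof. exact/Lfun1_integrable/integrable_excess. Qed.

Let expectation_excess y : ('E_P[excess y] = (sqpart P F x y)%:E)%E.
Proof. by rewrite fineK // expectation_fin_num // excess_Lfun1. Qed.

Lemma sqpart_peter_paul y1 y2 t : y1 <= y2 -> 0 < t ->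
  sqpart P F x y1 <= (1 + t) * sqpart P F x y2 + (1 + t^-1) * (y2 - y1) ^+ 2.
Proof.
move=> y12 t0; set k := (1 + t^-1) * (y2 - y1) ^+ 2.
have k0 : 0 <= k by rewrite mulr_ge0 ?sqr_ge0 // addr_ge0 // invr_ge0 ltW.
have t1 : 0 <= 1 + t by rewrite addr_ge0 // ltW.
have scaled : (1 + t) \o* excess y2 \in Lfun P 1.
  apply/Lfun1_integrable.
  apply: eq_integrable (integrableZl _ (1 + t) (integrable_excess y2)) => //.
  by move=> w _ /=; rewrite -EFinM mulrC.
have : ('E_P[excess y1] <= 'E_P[((1 + t) \o* excess y2) \+ cst k])%E.
  apply: expectation_le => //.
  - by apply: measurable_funD => //; apply: measurable_funM.
  - by move=> w; exact: sqr_ge0.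
  - by move=> w /=; rewrite addr_ge0 // mulr_ge0 // sqr_ge0.
  apply: aeW => w /=; rewrite mulrC /excess /k.
  apply: le_trans (sqrD_le_peter_paul _ _ _ t0).
  rewrite lerXn2r ?nnegrE ?ppartB_le ?ppart_ge0 //.
  by rewrite addr_ge0 ?ppart_ge0 // subr_ge0.
have const : cst k \in Lfun P 1.
  by apply/Lfun1_integrable; exact: finite_measure_integrable_cst.
rewrite expectationD // expectationZl // expectation_cst !expectation_excess.
by rewrite -EFinM -EFinD lee_fin.
Qed.

Lemma sqrt_sqpart_le y1 y2 : y1 <= y2 ->
  Num.sqrt (sqpart P F x y1) <= Num.sqrt (sqpart P F x y2) + (y2 - y1).
Proof.
rewrite le_eqVlt => /predU1P[->|y12]; first by rewrite subrr addr0.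
apply: sqrt_le_add_of_peter_paul; first exact: sqpart_ge0.
  by rewrite subr_gt0.
by move=> t t0; apply: sqpart_peter_paul => //; exact: ltW.
Qed.

Lemma Phi_nondecreasing c : 0 <= c -> c <= 1 ->
  {homo Phi P c F x : y1 y2 / y1 <= y2}.
Proof.
move=> c0 c1 y1 y2 y12; rewrite /Phi.
have := ler_wpM2l c0 (sqrt_sqpart_le _ _ y12); nra.
Qed.

End excess_moment.

Theorem lemma2 (d : measure_display) (T : measurableType d) (R : realType)
  (P : probability T R) (n : nat) (X : set 'rV[R]_n)
  (F : 'rV[R]_n -> T -> R) (c : R) :
  (forall x, X x -> measurable_fun setT (F x)) ->
  (forall x, X x -> P.-integrable setT (fun w => ((F x w) ^+ 2)%:E)) ->
  0 < c <= 1 ->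
  (forall x y, X x ->
     inf [set phi P c F x y z | z in `]0, +oo[%classic] = Phi P c F x y /\
     (0 < sqpart P F x y ->
        phi P c F x y (2 * Num.sqrt (sqpart P F x y)) = Phi P c F x y)) /\
  (forall x, X x ->
     inf [set r | exists y z, fmean P F x <= y /\ 0 < z /\ r = phi P c F x y z]
       = hfun P c F x /\
     inf [set Phi P c F x y | y in `[fmean P F x, +oo[%classic] = hfun P c F x /\
     Phi P c F x (fmean P F x) = hfun P c F x /\
     (0 < sqpart P F x (fmean P F x) ->
        phi P c F x (fmean P F x) (2 * Num.sqrt (sqpart P F x (fmean P F x)))
          = hfun P c F x)).
Proof.
move=> mF iF /andP[c0 c1].
have S0 x y : 0 <= sqpart P F x y by exact: sqpart_ge0.
split=> [x y _|x Xx].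
  by split=> [|S_gt0]; [exact: inf_amgm_sqrt | exact: sqrt_eq_amgm].
have Phi_mono := Phi_nondecreasing P (mF x Xx) (iF x Xx) c (ltW c0) c1.
set f := fmean P F x; have -> : hfun P c F x = Phi P c F x f by [].
split; [|split; [|split]] => //; last exact: sqrt_eq_amgm.
- apply: inf_eq_lb_approx => [_ [y [z [fy [z0 ->]]]]|e e0].
    exact: le_trans (Phi_mono _ _ fy) (sqrt_le_amgm _ _ _ _ c0 (S0 _ _) z0).
  have [z z0 le_z] := sqrt_approx_amgm c _ f e c0 (S0 x f) e0.
  by exists (phi P c F x f z) => //; exists f, z.
- apply: inf_eq_lb_approx => [_ [y + <-]|e e0].
    by rewrite /= in_itv /= andbT; exact: Phi_mono.
  exists (Phi P c F x f); last by rewrite lerDl ltW.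
  by exists f; rewrite //= in_itv /= lexx.
Qed.
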